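(* Let $M>0$, $\beta^*>0$, $0<I_0<M$, and let $g$ be the log-normal density $g(t)=\frac{1}{t\sigma\sqrt{2\pi}}\exp\!\big(-\frac{(\ln t-\mu)^2}{2\sigma^2}\big)$ for $t>0$, $g(t)=0$ for $t\le0$ ($\mu\in\mathbb{R}$, $\sigma>0$). Let $I$ be the unique $C^1$ solution on $[0,\infty)$ of \[ I'(t)=\beta^*(M-I(t))\Big(I(t)-\int_0^t g(t-s)I(s)\,ds\Big),\qquad I(0)=I_0, \] and set $I_a(t)=I(t)-\int_0^t g(t-s)I(s)\,ds$. Then the improper integral $\int_0^\infty I_a(t)\,dt$ converges. *)

From Stdlib Require Import Reals Lra.
From Coquelicot Require Export Coquelicot.
Open Scope R_scope.

Definition lognormal (mu sigma : R) (t : R) : R :=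
  if Rle_dec t 0 then 0
  else / (t * sigma * sqrt (2 * PI)) * exp (- (ln t - mu) ^ 2 / (2 * sigma ^ 2)).

Definition Ia (g I : R -> R) (t : R) : R :=
  I t - RInt (fun s => g (t - s) * I s) 0 t.

(* Let G be the log-normal distribution function. The function
   Psi x = int_0^x I(t) (1 - G (x - t)) dt has derivative I_a, so it suffices that I_a > 0
   and that Psi is bounded.
   Positivity is proved by continuous induction, together with I' > 0 and I < M: while I
   increases, its convolution with a kernel of total mass at most one stays below I, so
   I_a > 0; and since I_a <= I, the function (M - I) e^(beta M t) is nondecreasing.
   Boundedness: Psi x <= M int_0^oo (1 - G), which is finite because 1 - G u = O(u^-2).
   Both facts about G follow from G x = 1/2 + E (v x) / sqrt PI, where
   v x = (ln x - mu) / (sigma sqrt 2) and E is the Gaussian integral int_0^x e^(-t^2) dt,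
   whose limit sqrt PI / 2 comes from the constancy of
   E x ^ 2 + int_0^1 e^(-x^2 (1 + t^2)) / (1 + t^2) dt. *)

From Stdlib Require Import Reals Lra Psatz Classical.
From Coquelicot Require Import Coquelicot.
Open Scope R_scope.

(* Coquelicot states these for abstract normed modules (with [scal] for the product);
   specialised to [R] they apply and rewrite directly. *)
Lemma ex_derive_continuous_R (f : R -> R) x : ex_derive f x -> continuous f x.
Proof. exact (ex_derive_continuous (K := R_AbsRing) (V := R_NormedModule) f x). Qed.

Lemma ex_RInt_continuous_R (f : R -> R) a b :
  (forall z, continuous f z) -> ex_RInt f a b.
Proof. intros hf; apply (ex_RInt_continuous (V := R_CompleteNormedModule)); auto. Qed.

Lemma RInt_scal_R (f : R -> R) a b l : ex_RInt f a b ->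
  RInt (fun x => l * f x) a b = l * RInt f a b :> R.
Proof. exact (RInt_scal (V := R_CompleteNormedModule) f a b l). Qed.

Lemma RInt_comp_lin_R (f : R -> R) u v a b : ex_RInt f (u * a + v) (u * b + v) ->
  RInt (fun y => u * f (u * y + v)) a b = RInt f (u * a + v) (u * b + v) :> R.
Proof. exact (RInt_comp_lin (V := R_CompleteNormedModule) f u v a b). Qed.

Lemma RInt_const_R a b (c : R) : RInt (fun _ => c) a b = (b - a) * c :> R.
Proof. exact (RInt_const (V := R_CompleteNormedModule) a b c). Qed.

Lemma RInt_point_R a (f : R -> R) : RInt f a a = 0 :> R.
Proof. exact (RInt_point (V := R_CompleteNormedModule) a f). Qed.

Lemma RInt_ext_R (f g : R -> R) a b :
  (forall x, Rmin a b < x < Rmax a b -> f x = g x) -> RInt f a b = RInt g a b :> R.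
Proof. exact (RInt_ext (V := R_CompleteNormedModule) f g a b). Qed.

Lemma RInt_reflect (h : R -> R) b : (forall z, continuous h z) ->
  RInt (fun s => h (b - s)) 0 b = RInt h 0 b :> R.
Proof.
  intros hc.
  pose proof (RInt_comp_lin_R h (-1) b 0 b (ex_RInt_continuous_R h _ _ hc)) as hlin.
  replace (-1 * 0 + b) with b in hlin by ring; replace (-1 * b + b) with 0 in hlin by ring.
  rewrite <- (opp_RInt_swap (V := R_CompleteNormedModule) h 0 b) in hlin
    by (apply ex_RInt_continuous_R; auto).
  change (RInt (fun y => -1 * h (-1 * y + b)) 0 b = - RInt h 0 b) in hlin.
  rewrite RInt_scal_R in hlin.
  - rewrite (RInt_ext_R _ (fun y => h (-1 * y + b))) by (intros; f_equal; ring). lra.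
  - apply ex_RInt_continuous_R; intros z.
    apply (continuous_comp (fun y => -1 * y + b) h); [|apply hc].
    apply ex_derive_continuous_R; auto_derive; trivial.
Qed.

Lemma is_derive_RInt_R (f : R -> R) a x : (forall y, continuous f y) ->
  is_derive (fun b => RInt f a b) x (f x).
Proof.
  intros hf; apply is_derive_RInt with a; [|auto].
  apply filter_forall; intros; apply RInt_correct, ex_RInt_continuous_R; auto.
Qed.

Lemma MVT_open (f df : R -> R) a b : a < b ->
  (forall x, a < x < b -> is_derive f x (df x)) ->
  (forall x, a <= x <= b -> continuous f x) ->
  exists c, a < c < b /\ f b - f a = df c * (b - a).
Proof.
  intros hab hd hc.
  assert (pr1 : forall c, a < c < b -> derivable_pt f c)
    by (intros c hc'; exists (df c); apply is_derive_Reals, hd; auto).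
  assert (pr2 : forall c, a < c < b -> derivable_pt id c)
    by (intros; apply derivable_pt_id).
  destruct (MVT f id a b pr1 pr2 hab) as [c [hcab Hc]].
  - intros; apply continuity_pt_filterlim, hc; auto.
  - intros; apply derivable_continuous_pt, derivable_pt_id.
  - exists c; split; auto.
    rewrite (derive_pt_eq_0 f c (df c) (pr1 c hcab)) in Hc
      by (apply is_derive_Reals, hd; auto).
    rewrite (derive_pt_eq_0 id c 1 (pr2 c hcab)) in Hc by apply derivable_pt_lim_id.
    unfold id in Hc; lra.
Qed.

Lemma le_of_derive_nonneg (f df : R -> R) a b : a <= b ->
  (forall x, a < x < b -> is_derive f x (df x)) ->
  (forall x, a <= x <= b -> continuous f x) ->
  (forall x, a < x < b -> 0 <= df x) -> f a <= f b.
Proof.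
  intros hab hd hc hp; destruct (Req_dec a b) as [->|hne]; [lra|].
  destruct (MVT_open f df a b) as [c [hc1 hc2]]; try lra; auto.
  specialize (hp c hc1); nra.
Qed.

Lemma lt_of_derive_pos (f df : R -> R) a b : a < b ->
  (forall x, a < x < b -> is_derive f x (df x)) ->
  (forall x, a <= x <= b -> continuous f x) ->
  (forall x, a < x < b -> 0 < df x) -> f a < f b.
Proof.
  intros hab hd hc hp.
  destruct (MVT_open f df a b) as [c [hc1 hc2]]; auto.
  specialize (hp c hc1); nra.
Qed.

Lemma eq_of_derive_zero (f : R -> R) a b : a <= b ->
  (forall x, a < x < b -> is_derive f x 0) ->
  (forall x, a <= x <= b -> continuous f x) -> f a = f b.
Proof.
  intros hab hd hc; destruct (Req_dec a b) as [->|hne]; [lra|].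
  destruct (MVT_open f (fun _ => 0) a b) as [c [hc1 hc2]]; auto; lra.
Qed.

Lemma eq0_of_abs_le_small (a C m : R) : 0 < m ->
  (forall e, 0 < e < m -> Rabs a <= C * e) -> a = 0.
Proof.
  intros hm H; destruct (Req_dec a 0) as [|ha]; auto; exfalso.
  apply Rabs_pos_lt in ha.
  pose proof (Rabs_pos C); pose proof (Rle_abs C).
  set (e := Rmin (m / 2) (Rabs a / (2 * (Rabs C + 1)))).
  assert (he1 : e <= m / 2) by apply Rmin_l.
  assert (he2 : e * (2 * (Rabs C + 1)) <= Rabs a).
  { apply Rle_trans with (Rabs a / (2 * (Rabs C + 1)) * (2 * (Rabs C + 1))).
    - apply Rmult_le_compat_r; [lra|apply Rmin_r].
    - right; field; lra. }
  assert (he0 : 0 < e) by (apply Rmin_glb_lt; [lra|apply Rdiv_lt_0_compat; lra]).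
  specialize (H e ltac:(lra)); nra.
Qed.

Lemma continuous_pos_near (f : R -> R) t : continuous f t -> 0 < f t ->
  exists d, 0 < d /\ forall s, Rabs (s - t) < d -> 0 < f s.
Proof.
  intros hc hp.
  destruct (proj1 (filterlim_locally f (f t)) hc (mkposreal (f t) hp)) as [d Hd].
  exists d; split; [apply cond_pos|]; intros s hs.
  specialize (Hd s hs); change (Rabs (f s - f t) < f t) in Hd.
  apply Rabs_def2 in Hd; lra.
Qed.

Lemma at_right_continuous_of_diff_quot (f : R -> R) l :
  filterlim (fun h => (f h - f 0) / h) (at_right 0) (locally l) ->
  filterlim f (at_right 0) (locally (f 0)).
Proof.
  intros hq.
  assert (hid : filterlim (fun h : R => h) (at_right 0) (locally 0))
    by (apply (filterlim_filter_le_1 (F := locally 0));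
        [apply filter_le_within|apply filterlim_id]).
  assert (hlim : filterlim (fun h => f 0 + h * ((f h - f 0) / h)) (at_right 0)
                   (locally (f 0 + 0 * l))).
  { eapply filterlim_comp_2; [apply filterlim_const| |apply (filterlim_plus (f 0) (0 * l))].
    eapply filterlim_comp_2; [exact hid|exact hq|apply (filterlim_mult 0 l)]. }
  rewrite Rmult_0_l, Rplus_0_r in hlim.
  apply filterlim_ext_loc with (2 := hlim).
  exists (mkposreal 1 Rlt_0_1); intros h _ hh; simpl; field; lra.
Qed.

(* The model constrains [I] and [I'] only on [[0, +oo)]; extending them constantly to the
   left makes them continuous on [R], as Coquelicot's integration lemmas require. *)
Definition extend0 (f : R -> R) (s : R) : R := f (Rmax 0 s).

Lemma extend0_nonneg (f : R -> R) s : 0 <= s -> extend0 f s = f s.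
Proof. intros; unfold extend0; rewrite Rmax_right; auto. Qed.

Lemma extend0_nonpos (f : R -> R) s : s <= 0 -> extend0 f s = f 0.
Proof. intros; unfold extend0; rewrite Rmax_left; auto. Qed.

Lemma extend0_continuous (f : R -> R) :
  (forall x, 0 < x -> continuous f x) -> filterlim f (at_right 0) (locally (f 0)) ->
  forall x, continuous (extend0 f) x.
Proof.
  intros hpos h0 x; unfold extend0; destruct (Rtotal_order x 0) as [h|[->|h]].
  - apply continuous_ext_loc with (fun _ => f 0); [|apply continuous_const].
    exists (mkposreal (- x) ltac:(lra)); intros y hy.
    change (Rabs (y - x) < - x) in hy; apply Rabs_def2 in hy.
    rewrite Rmax_left by lra; reflexivity.
  - apply filterlim_locally; intros eps.
    destruct (proj1 (filterlim_locally f (f 0)) h0 eps) as [d Hd].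
    exists d; intros y hy; rewrite (Rmax_left 0 0) by lra.
    destruct (Rle_dec y 0).
    + rewrite Rmax_left by lra; apply ball_center.
    + rewrite Rmax_right by lra; apply Hd; auto; lra.
  - apply continuous_ext_loc with f; [|apply hpos; auto].
    exists (mkposreal x h); intros y hy.
    change (Rabs (y - x) < x) in hy; apply Rabs_def2 in hy.
    rewrite Rmax_right by lra; reflexivity.
Qed.

Lemma real_induction (P : R -> Prop) : P 0 ->
  (forall t, 0 <= t -> P t -> exists d, 0 < d /\ forall s, t < s < t + d -> P s) ->
  (forall t, 0 < t -> (forall s, 0 <= s < t -> P s) -> P t) ->
  forall t, 0 <= t -> P t.
Proof.
  intros h0 hopen hclosed T hT.
  destruct (classic (forall s, 0 <= s <= T -> P s)) as [hall|hfail]; [apply hall; lra|].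
  exfalso.
  set (S := fun t => 0 <= t <= T /\ forall s, 0 <= s <= t -> P s).
  assert (hS0 : S 0) by (split; [lra|]; intros s hs; replace s with 0 by lra; auto).
  destruct (completeness S (ex_intro _ T (fun x hx => proj2 (proj1 hx))) (ex_intro _ 0 hS0))
    as [ts [hub hlub]].
  assert (hts0 : 0 <= ts) by (apply hub; auto).
  assert (htsT : ts <= T) by (apply hlub; intros x [hx _]; lra).
  assert (hbelow : forall s, 0 <= s < ts -> P s).
  { intros s hs; destruct (classic (exists t, S t /\ s < t)) as [[t [[_ ht] hst]]|hno].
    - apply ht; lra.
    - exfalso; assert (ts <= s); [|lra]. apply hlub; intros x hx.
      destruct (Rle_dec x s); auto; exfalso; apply hno; exists x; split; auto; lra. }
  assert (hupto : forall s, 0 <= s <= ts -> P s).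
  { intros s hs; destruct (Req_dec s ts) as [->|]; [|apply hbelow; lra].
    destruct (Req_dec ts 0) as [->|]; [auto|apply hclosed; auto; lra]. }
  assert (hltT : ts < T) by (destruct (Req_dec ts T) as [->|]; [exfalso; auto|lra]).
  destruct (hopen ts hts0 (hupto ts ltac:(lra))) as [d [hd Hd]].
  set (t' := Rmin (ts + d / 2) T).
  assert (t' <= ts + d / 2) by apply Rmin_l.
  assert (t' <= T) by apply Rmin_r.
  assert (ts < t') by (apply Rmin_glb_lt; lra).
  assert (hSt' : S t').
  { split; [lra|]; intros s hs.
    destruct (Rle_dec s ts); [apply hupto; lra|apply Hd; lra]. }
  pose proof (hub t' hSt'); lra.
Qed.

Lemma cvg_pinfty_of_nondecreasing (F : R -> R) B :
  (forall a b, 0 <= a <= b -> F a <= F b) -> (forall b, 0 <= b -> F b <= B) ->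
  exists L, filterlim F (Rbar_locally p_infty) (locally L).
Proof.
  intros hmono hbd.
  set (S := fun y => exists b, 0 <= b /\ y = F b).
  assert (hS0 : S (F 0)) by (exists 0; split; [lra|auto]).
  assert (hSB : bound S) by (exists B; intros y [b [hb ->]]; auto).
  destruct (completeness S hSB (ex_intro _ _ hS0)) as [L [hub hlub]].
  exists L; apply filterlim_locally; intros eps.
  destruct (classic (exists b, 0 <= b /\ L - eps < F b)) as [[b0 [hb0 hlt]]|hno].
  - exists b0; intros b hb; change (Rabs (F b - L) < eps).
    pose proof (hmono b0 b ltac:(lra)).
    assert (F b <= L) by (apply hub; exists b; split; auto; lra).
    apply Rabs_def1; lra.
  - exfalso; assert (L <= L - eps); [|pose proof (cond_pos eps); lra].
    apply hlub; intros y [b [hb ->]]; destruct (Rle_dec (F b) (L - eps)); auto.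
    exfalso; apply hno; exists b; split; auto; lra.
Qed.

(** * The Gaussian integral *)

Definition gauss (t : R) : R := exp (- (t * t)).
Definition gauss_int (x : R) : R := RInt gauss 0 x.
Definition gauss_aux (x : R) : R :=
  RInt (fun t => exp (- (x * x * (1 + t * t))) / (1 + t * t)) 0 1.
Definition half_sqrt_PI : R := sqrt PI / 2.

Lemma sqrt2_pos : 0 < sqrt 2.
Proof. apply sqrt_lt_R0; lra. Qed.

Lemma sqrt_PI_eq : sqrt PI = 2 * half_sqrt_PI.
Proof. unfold half_sqrt_PI; field. Qed.

Lemma gauss_pos x : 0 < gauss x.
Proof. apply exp_pos. Qed.

Lemma gauss_continuous x : continuous gauss x.
Proof. apply ex_derive_continuous_R; unfold gauss; auto_derive; trivial. Qed.

Lemma gauss_le_exp v c : gauss v <= exp (c * c + 2 * c * v).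
Proof.
  unfold gauss; destruct (Req_dec (v + c) 0) as [h|h].
  - right; f_equal; replace c with (- v) by lra; ring.
  - left; apply exp_increasing.
    assert (0 < (v + c) * (v + c)) by (apply Rsqr_pos_lt; auto); nra.
Qed.

Lemma is_derive_gauss_int x : is_derive gauss_int x (gauss x).
Proof. apply is_derive_RInt_R, gauss_continuous. Qed.

Lemma is_derive_gauss_aux x : is_derive gauss_aux x (-2 * gauss x * gauss_int x).
Proof.
  set (f := fun u t => exp (- (u * u * (1 + t * t))) / (1 + t * t)).
  assert (hpos : forall t, 1 + t * t <> 0) by (intros t; nra).
  assert (hDf : forall u t, Derive (fun z => f z t) u = -2 * u * exp (- (u * u * (1 + t * t)))).
  { intros u t; apply is_derive_unique; unfold f; auto_derive; [auto|field; auto]. }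
  assert (hf : forall u t, continuous (fun t => f u t) t)
    by (intros; apply ex_derive_continuous_R; unfold f; auto_derive; auto).
  replace (-2 * gauss x * gauss_int x) with (RInt (fun t => Derive (fun u => f u t) x) 0 1).
  - apply (is_derive_RInt_param f 0 1 x).
    + apply filter_forall; intros; unfold f; auto_derive; auto.
    + intros t _.
      apply continuity_2d_pt_ext with (f := fun u v => -2 * u * exp (- (u * u * (1 + v * v))));
        [intros; symmetry; apply hDf|].
      apply continuity_2d_pt_mult;
        [apply continuity_2d_pt_mult; [apply continuity_2d_pt_const|apply continuity_2d_pt_id1]|].
      apply continuity_1d_2d_pt_comp with (f := exp) (g := fun u v => - (u * u * (1 + v * v)));
        [apply derivable_continuous_pt, derivable_pt_exp|].
      apply continuity_2d_pt_opp, continuity_2d_pt_mult;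
        [apply continuity_2d_pt_mult; apply continuity_2d_pt_id1|].
      apply continuity_2d_pt_plus; [apply continuity_2d_pt_const|].
      apply continuity_2d_pt_mult; apply continuity_2d_pt_id2.
    + apply filter_forall; intros; apply ex_RInt_continuous_R; auto.
  - (* substitute [y = x t] *)
    rewrite (RInt_ext_R _ (fun t => x * ((fun y => -2 * gauss x * gauss y) (x * t + 0)))).
    2: { intros t _; rewrite hDf; unfold gauss.
         replace (- (x * x * (1 + t * t))) with (- (x * x) + - ((x * t + 0) * (x * t + 0)))
           by ring.
         rewrite exp_plus; ring. }
    rewrite (RInt_comp_lin_R (fun y => -2 * gauss x * gauss y) x 0 0 1)
      by (apply ex_RInt_continuous_R; intros; apply ex_derive_continuous_R;
          unfold gauss; auto_derive; trivial).
    rewrite Rmult_0_r, Rmult_1_r, !Rplus_0_r.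
    rewrite RInt_scal_R by (apply ex_RInt_continuous_R, gauss_continuous).
    reflexivity.
Qed.

Lemma gauss_aux_0 : gauss_aux 0 = PI / 4.
Proof.
  unfold gauss_aux; rewrite (RInt_ext_R _ (fun t => / (1 + t ^ 2))).
  - rewrite (is_RInt_unique _ 0 1 (atan 1 - atan 0)).
    + rewrite atan_1, atan_0; ring.
    + apply (is_RInt_derive (V := R_CompleteNormedModule) atan).
      * intros; apply is_derive_Reals, derivable_pt_lim_atan.
      * intros; apply ex_derive_continuous_R; auto_derive; nra.
  - intros t _; replace (- (0 * 0 * (1 + t * t))) with 0 by ring.
    rewrite exp_0; field; nra.
Qed.

Lemma gauss_int_sqr_add_aux x : 0 <= x -> gauss_int x * gauss_int x + gauss_aux x = PI / 4.
Proof.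
  intros hx; rewrite <- gauss_aux_0.
  replace (gauss_aux 0) with (gauss_int 0 * gauss_int 0 + gauss_aux 0)
    by (unfold gauss_int; rewrite RInt_point_R; ring).
  assert (hd : forall y, is_derive (fun y => gauss_int y * gauss_int y + gauss_aux y) y 0).
  { intros y.
    apply (is_derive_ext _ _ _ _ (fun _ => eq_refl)).
    replace 0 with (gauss y * gauss_int y + gauss_int y * gauss y + -2 * gauss y * gauss_int y)
      by ring.
    apply (is_derive_plus (K := R_AbsRing) (V := R_NormedModule)); [|apply is_derive_gauss_aux].
    apply (is_derive_mult (K := R_AbsRing)); [apply is_derive_gauss_int..|].
    intros; apply Rmult_comm. }
  symmetry; apply (eq_of_derive_zero (fun y => gauss_int y * gauss_int y + gauss_aux y) 0 x hx);
    [intros; apply hd|].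
  intros; apply ex_derive_continuous_R; eexists; apply hd.
Qed.

Lemma gauss_aux_bounds x : 0 <= gauss_aux x <= gauss x.
Proof.
  assert (hpos : forall t, 0 < 1 + t * t) by (intros; nra).
  assert (hex : ex_RInt (fun t => exp (- (x * x * (1 + t * t))) / (1 + t * t)) 0 1).
  { apply ex_RInt_continuous_R; intros; apply ex_derive_continuous_R.
    auto_derive; specialize (hpos z); lra. }
  unfold gauss_aux; split.
  - apply RInt_ge_0; auto; [lra|].
    intros t _; apply Rle_mult_inv_pos; [apply Rlt_le, exp_pos|apply hpos].
  - assert (hc : RInt (fun _ => gauss x) 0 1 = gauss x :> R) by (rewrite RInt_const_R; ring).
    rewrite <- hc.
    apply RInt_le; auto; [lra|apply ex_RInt_continuous_R; intros; apply continuous_const|].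
    intros t _; unfold gauss.
    assert (exp (- (x * x * (1 + t * t))) <= exp (- (x * x))).
    { destruct (Req_dec (x * t) 0) as [h|h].
      - right; f_equal; nra.
      - left; apply exp_increasing; assert (0 < (x * t) * (x * t)) by (apply Rsqr_pos_lt; auto).
        nra. }
    pose proof (hpos t); pose proof (exp_pos (- (x * x * (1 + t * t)))).
    apply Rmult_le_reg_r with (1 + t * t); auto.
    unfold Rdiv; rewrite Rmult_assoc, Rinv_l by lra.
    pose proof (exp_pos (- (x * x))); nra.
Qed.

Lemma half_sqrt_PI_pos : 0 < half_sqrt_PI.
Proof. unfold half_sqrt_PI; pose proof (sqrt_lt_R0 PI PI_RGT_0); lra. Qed.

Lemma half_sqrt_PI_sqr : half_sqrt_PI * half_sqrt_PI = PI / 4.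
Proof.
  unfold half_sqrt_PI; pose proof PI_RGT_0.
  replace (sqrt PI / 2 * (sqrt PI / 2)) with (sqrt PI * sqrt PI / 4) by field.
  rewrite sqrt_sqrt; lra.
Qed.

Lemma gauss_int_nonneg x : 0 <= x -> 0 <= gauss_int x.
Proof.
  intros hx; apply RInt_ge_0; auto; [apply ex_RInt_continuous_R, gauss_continuous|].
  intros; apply Rlt_le, gauss_pos.
Qed.

Lemma gauss_int_opp x : gauss_int (- x) = - gauss_int x.
Proof.
  unfold gauss_int.
  pose proof (RInt_comp_lin_R gauss (-1) 0 0 x) as hlin.
  replace (-1 * 0 + 0) with 0 in hlin by ring; replace (-1 * x + 0) with (- x) in hlin by ring.
  rewrite <- hlin by (apply ex_RInt_continuous_R, gauss_continuous).
  rewrite (RInt_ext_R _ (fun y => -1 * gauss y)) by (intros; unfold gauss; do 2 f_equal; ring).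
  rewrite RInt_scal_R by (apply ex_RInt_continuous_R, gauss_continuous); ring.
Qed.

Lemma gauss_int_le_pos x : 0 <= x -> gauss_int x <= half_sqrt_PI.
Proof.
  intros hx; pose proof (gauss_int_sqr_add_aux x hx); pose proof (gauss_aux_bounds x).
  pose proof half_sqrt_PI_sqr; pose proof half_sqrt_PI_pos; pose proof (gauss_int_nonneg x hx).
  nra.
Qed.

Lemma gauss_int_tail_pos x : 0 <= x -> half_sqrt_PI - gauss_int x <= gauss x / half_sqrt_PI.
Proof.
  intros hx; pose proof (gauss_int_sqr_add_aux x hx); pose proof (gauss_aux_bounds x).
  pose proof half_sqrt_PI_sqr; pose proof half_sqrt_PI_pos; pose proof (gauss_int_nonneg x hx).
  apply Rmult_le_reg_r with half_sqrt_PI; auto.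
  unfold Rdiv; rewrite Rmult_assoc, Rinv_l by lra; nra.
Qed.

Lemma gauss_int_bounds x : - half_sqrt_PI <= gauss_int x <= half_sqrt_PI.
Proof.
  pose proof half_sqrt_PI_pos.
  destruct (Rle_dec 0 x) as [hx|hx].
  - pose proof (gauss_int_nonneg x hx); pose proof (gauss_int_le_pos x hx); lra.
  - replace x with (- - x) by ring; rewrite gauss_int_opp.
    pose proof (gauss_int_nonneg (- x) ltac:(lra)).
    pose proof (gauss_int_le_pos (- x) ltac:(lra)); lra.
Qed.

Lemma gauss_int_tail_neg x : x <= 0 -> gauss_int x + half_sqrt_PI <= gauss x / half_sqrt_PI.
Proof.
  intros hx; replace x with (- - x) by ring; rewrite gauss_int_opp.
  replace (gauss (- - x)) with (gauss (- x)) by (unfold gauss; f_equal; ring).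
  pose proof (gauss_int_tail_pos (- x) ltac:(lra)); lra.
Qed.

(** * The log-normal distribution *)

Section Lognormal.

Variables mu sigma : R.
Hypothesis hsigma : 0 < sigma.

Let g := lognormal mu sigma.

Definition erf_arg (t : R) : R := (ln t - mu) / (sigma * sqrt 2).
Definition lognormal_cdf (x : R) : R := RInt g 0 x.

Lemma lognormal_nonpos t : t <= 0 -> g t = 0.
Proof. intros ht; unfold g, lognormal; destruct (Rle_dec t 0); [auto|lra]. Qed.

Lemma lognormal_gauss t : 0 < t ->
  g t = gauss (erf_arg t) / (t * sigma * sqrt (2 * PI)).
Proof.
  intros ht; unfold g, lognormal, gauss, erf_arg; destruct (Rle_dec t 0); [lra|].
  pose proof sqrt2_pos; pose proof (sqrt_lt_R0 (2 * PI) ltac:(pose proof PI_RGT_0; lra)).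
  assert (h2 : sqrt 2 * sqrt 2 = 2) by (apply sqrt_sqrt; lra).
  replace ((ln t - mu) / (sigma * sqrt 2) * ((ln t - mu) / (sigma * sqrt 2)))
    with ((ln t - mu) ^ 2 / (sigma ^ 2 * (sqrt 2 * sqrt 2))) by (field; lra).
  rewrite h2.
  replace (- ((ln t - mu) ^ 2 / (sigma ^ 2 * 2))) with (- (ln t - mu) ^ 2 / (2 * sigma ^ 2))
    by (field; lra).
  field; repeat split; nra.
Qed.

Lemma gauss_erf_arg_le t : 0 < t -> gauss (erf_arg t) <= exp (2 * sigma ^ 2 - 2 * mu) * (t * t).
Proof.
  intros ht; eapply Rle_trans; [apply (gauss_le_exp _ (sigma * sqrt 2))|].
  assert (h2 : sqrt 2 * sqrt 2 = 2) by (apply sqrt_sqrt; lra); pose proof sqrt2_pos.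
  replace (t * t) with (exp (2 * ln t))
    by (replace (2 * ln t) with (ln t + ln t) by ring; rewrite exp_plus, exp_ln; auto).
  rewrite <- exp_plus; right; f_equal; unfold erf_arg.
  replace (sigma * sqrt 2 * (sigma * sqrt 2)) with (sigma ^ 2 * (sqrt 2 * sqrt 2)) by ring.
  rewrite h2; field; lra.
Qed.

Lemma gauss_erf_arg_mul_sqr_le t : 0 < t ->
  gauss (erf_arg t) * (t * t) <= exp (2 * sigma ^ 2 + 2 * mu).
Proof.
  intros ht; assert (h2 : sqrt 2 * sqrt 2 = 2) by (apply sqrt_sqrt; lra); pose proof sqrt2_pos.
  assert (htt : t * t = exp (2 * ln t))
    by (replace (2 * ln t) with (ln t + ln t) by ring; rewrite exp_plus, exp_ln; auto).
  apply Rle_trans with (exp (2 * sigma ^ 2 + 2 * mu - 2 * ln t) * (t * t)).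
  - apply Rmult_le_compat_r; [nra|].
    eapply Rle_trans; [apply (gauss_le_exp _ (- (sigma * sqrt 2)))|].
    right; f_equal; unfold erf_arg.
    replace (- (sigma * sqrt 2) * - (sigma * sqrt 2)) with (sigma ^ 2 * (sqrt 2 * sqrt 2)) by ring.
    rewrite h2; field; lra.
  - rewrite htt, <- exp_plus; right; f_equal; ring.
Qed.

Lemma lognormal_pos t : 0 < t -> 0 < g t.
Proof.
  intros ht; rewrite lognormal_gauss by auto; pose proof (gauss_pos (erf_arg t)).
  pose proof (sqrt_lt_R0 (2 * PI) ltac:(pose proof PI_RGT_0; lra)).
  apply Rdiv_lt_0_compat; auto; apply Rmult_lt_0_compat; nra.
Qed.

Lemma lognormal_nonneg t : 0 <= g t.
Proof.
  destruct (Rle_dec t 0); [rewrite lognormal_nonpos; lra|].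
  apply Rlt_le, lognormal_pos; lra.
Qed.

Lemma lognormal_le_linear : exists K, 0 < K /\ forall t, g t <= K * Rabs t.
Proof.
  pose proof (sqrt_lt_R0 (2 * PI) ltac:(pose proof PI_RGT_0; lra)).
  assert (hc : 0 < sigma * sqrt (2 * PI)) by nra.
  exists (exp (2 * sigma ^ 2 - 2 * mu) / (sigma * sqrt (2 * PI))); split;
    [apply Rdiv_lt_0_compat; [apply exp_pos|auto]|].
  intros t; destruct (Rle_dec t 0).
  - rewrite lognormal_nonpos by auto.
    apply Rmult_le_pos; [apply Rlt_le, Rdiv_lt_0_compat; [apply exp_pos|auto]|apply Rabs_pos].
  - rewrite lognormal_gauss, Rabs_right by lra.
    pose proof (gauss_erf_arg_le t ltac:(lra)).
    apply Rle_trans with (exp (2 * sigma ^ 2 - 2 * mu) * (t * t) / (t * sigma * sqrt (2 * PI))).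
    + apply Rmult_le_compat_r; auto.
      apply Rlt_le, Rinv_0_lt_compat; apply Rmult_lt_0_compat; nra.
    + right; field; lra.
Qed.

Lemma lognormal_continuous t : continuous g t.
Proof.
  destruct (Rtotal_order t 0) as [h|[->|h]].
  - apply continuous_ext_loc with (fun _ => 0); [|apply continuous_const].
    exists (mkposreal (- t) ltac:(lra)); intros y hy.
    change (Rabs (y - t) < - t) in hy; apply Rabs_def2 in hy.
    symmetry; apply lognormal_nonpos; lra.
  - destruct lognormal_le_linear as [K [hK HK]].
    apply filterlim_locally; intros eps.
    exists (mkposreal (eps / K) (Rdiv_lt_0_compat _ _ (cond_pos eps) hK)); intros y hy.
    change (Rabs (y - 0) < eps / K) in hy; rewrite Rminus_0_r in hy.
    change (Rabs (g y - g 0) < eps).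
    pose proof (lognormal_nonneg y).
    rewrite (lognormal_nonpos 0), Rminus_0_r, Rabs_right by lra.
    apply Rle_lt_trans with (K * Rabs y); [apply HK|].
    apply Rmult_lt_reg_r with (/ K); [apply Rinv_0_lt_compat; auto|].
    rewrite Rmult_comm, <- Rmult_assoc, Rinv_l by lra; lra.
  - apply continuous_ext_loc with
      (fun y => / (y * sigma * sqrt (2 * PI)) * exp (- (ln y - mu) ^ 2 / (2 * sigma ^ 2))).
    + exists (mkposreal t h); intros y hy.
      change (Rabs (y - t) < t) in hy; apply Rabs_def2 in hy.
      unfold g, lognormal; destruct (Rle_dec y 0); [lra|auto].
    + pose proof (sqrt_lt_R0 (2 * PI) ltac:(pose proof PI_RGT_0; lra)).
      apply ex_derive_continuous_R; auto_derive; repeat split; try lra.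
      apply Rgt_not_eq, Rmult_lt_0_compat; nra.
Qed.

Lemma is_derive_lognormal_cdf x : is_derive lognormal_cdf x (g x).
Proof. apply is_derive_RInt_R, lognormal_continuous. Qed.

Lemma lognormal_cdf_continuous x : continuous lognormal_cdf x.
Proof. apply ex_derive_continuous_R; eexists; apply is_derive_lognormal_cdf. Qed.

Lemma lognormal_cdf_nonpos x : x <= 0 -> lognormal_cdf x = 0.
Proof.
  intros hx; unfold lognormal_cdf; rewrite (RInt_ext_R _ (fun _ => 0)).
  - rewrite RInt_const_R; ring.
  - intros t ht; rewrite Rmin_right, Rmax_left in ht by lra; apply lognormal_nonpos; lra.
Qed.

Lemma lognormal_cdf_nonneg x : 0 <= lognormal_cdf x.
Proof.
  destruct (Rle_dec x 0); [rewrite lognormal_cdf_nonpos; lra|].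
  apply RInt_ge_0; [lra|apply ex_RInt_continuous_R, lognormal_continuous|].
  intros; apply lognormal_nonneg.
Qed.

Lemma lognormal_cdf_small : exists K, 0 < K /\ forall e, 0 < e -> lognormal_cdf e <= K * e * e.
Proof.
  destruct lognormal_le_linear as [K [hK HK]]; exists K; split; auto; intros e he.
  assert (hc : RInt (fun _ => K * e) 0 e = K * e * e :> R) by (rewrite RInt_const_R; ring).
  unfold lognormal_cdf; rewrite <- hc.
  apply RInt_le; [lra|apply ex_RInt_continuous_R, lognormal_continuous|
                  apply ex_RInt_continuous_R; intros; apply continuous_const|].
  intros t ht; eapply Rle_trans; [apply HK|]; rewrite Rabs_right by lra; nra.
Qed.

Lemma is_derive_lognormal_cdf_sub_gauss_int x : 0 < x ->
  is_derive (fun y => lognormal_cdf y - gauss_int (erf_arg y) / sqrt PI) x 0.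
Proof.
  intros hx; pose proof sqrt2_pos; pose proof half_sqrt_PI_pos; unfold erf_arg.
  auto_derive.
  - repeat split; auto; [eexists; apply is_derive_lognormal_cdf|eexists; apply is_derive_gauss_int].
  - replace ((ln x + - mu) * / (sigma * sqrt 2)) with (erf_arg x)
      by (unfold erf_arg, Rdiv; ring).
    replace (Derive (fun y : R => lognormal_cdf y) x) with (g x)
      by (symmetry; apply is_derive_unique, is_derive_lognormal_cdf).
    replace (Derive (fun y : R => gauss_int y) (erf_arg x)) with (gauss (erf_arg x))
      by (symmetry; apply is_derive_unique, is_derive_gauss_int).
    rewrite lognormal_gauss by auto.
    rewrite (sqrt_mult 2 PI) by (try lra; left; apply PI_RGT_0).
    rewrite sqrt_PI_eq; field; repeat split; lra.
Qed.

Lemma erf_arg_nonpos e : 0 < e <= exp mu -> erf_arg e <= 0.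
Proof.
  intros he; unfold erf_arg; pose proof sqrt2_pos.
  assert (ln e <= mu) by (rewrite <- (ln_exp mu); apply ln_le; lra).
  apply Rmult_le_reg_r with (sigma * sqrt 2); [nra|].
  unfold Rdiv; rewrite Rmult_assoc, Rinv_l by nra; lra.
Qed.

Lemma erf_arg_nonneg u : exp mu <= u -> 0 <= erf_arg u.
Proof.
  intros hu; unfold erf_arg; pose proof sqrt2_pos.
  assert (mu <= ln u) by (rewrite <- (ln_exp mu); apply ln_le; [apply exp_pos|lra]).
  apply Rle_mult_inv_pos; nra.
Qed.

Lemma lognormal_cdf_sub_gauss_int_const e x : 0 < e <= x ->
  lognormal_cdf e - gauss_int (erf_arg e) / sqrt PI
  = lognormal_cdf x - gauss_int (erf_arg x) / sqrt PI.
Proof.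
  intros hex.
  apply (eq_of_derive_zero (fun y => lognormal_cdf y - gauss_int (erf_arg y) / sqrt PI)); [lra| |].
  - intros y hy; apply is_derive_lognormal_cdf_sub_gauss_int; lra.
  - intros y hy; apply ex_derive_continuous_R; eexists.
    apply is_derive_lognormal_cdf_sub_gauss_int; lra.
Qed.

Lemma gauss_int_erf_arg_small : exists C, 0 < C /\ forall e, 0 < e <= exp mu ->
  0 <= (gauss_int (erf_arg e) + half_sqrt_PI) / sqrt PI <= C * e * e.
Proof.
  pose proof half_sqrt_PI_pos; rewrite sqrt_PI_eq.
  exists (exp (2 * sigma ^ 2 - 2 * mu) / (2 * (half_sqrt_PI * half_sqrt_PI))).
  split; [apply Rdiv_lt_0_compat; [apply exp_pos|nra]|]; intros e he.
  pose proof (erf_arg_nonpos e he) as hv.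
  pose proof (gauss_int_tail_neg _ hv); pose proof (gauss_int_bounds (erf_arg e)).
  pose proof (gauss_erf_arg_le e ltac:(lra)).
  split; [apply Rle_mult_inv_pos; lra|].
  apply Rle_trans with (exp (2 * sigma ^ 2 - 2 * mu) * (e * e) / half_sqrt_PI / (2 * half_sqrt_PI)).
  - unfold Rdiv; apply Rmult_le_compat_r; [apply Rlt_le, Rinv_0_lt_compat; lra|].
    apply Rle_trans with (gauss (erf_arg e) * / half_sqrt_PI); [lra|].
    apply Rmult_le_compat_r; [apply Rlt_le, Rinv_0_lt_compat|]; lra.
  - right; field; lra.
Qed.

(* The difference of both sides is constant on [(0, +oo)]; it vanishes since at [e -> 0]
   both [lognormal_cdf e] and [gauss_int (erf_arg e) + sqrt PI / 2] are [O(e^2)]. *)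
Lemma lognormal_cdf_formula x : 0 < x ->
  lognormal_cdf x = 1 / 2 + gauss_int (erf_arg x) / sqrt PI.
Proof.
  intros hx; pose proof half_sqrt_PI_pos.
  set (a := lognormal_cdf x - gauss_int (erf_arg x) / sqrt PI - 1 / 2).
  enough (a = 0) by (unfold a in *; lra).
  destruct lognormal_cdf_small as [K [hK HK]].
  destruct gauss_int_erf_arg_small as [C [hC HC]].
  set (m := Rmin x (Rmin (exp mu) 1)).
  assert (hm : 0 < m) by (repeat apply Rmin_glb_lt; auto; [apply exp_pos|lra]).
  apply (eq0_of_abs_le_small a (K + C) m hm); intros e he.
  assert (hex : e < x /\ e < exp mu /\ e < 1).
  { unfold m in he; pose proof (Rmin_l x (Rmin (exp mu) 1)).
    pose proof (Rmin_r x (Rmin (exp mu) 1)); pose proof (Rmin_l (exp mu) 1).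
    pose proof (Rmin_r (exp mu) 1); lra. }
  assert (ha : a = lognormal_cdf e - (gauss_int (erf_arg e) + half_sqrt_PI) / sqrt PI).
  { unfold a; rewrite <- (lognormal_cdf_sub_gauss_int_const e x) by lra.
    rewrite sqrt_PI_eq; field; lra. }
  pose proof (HK e ltac:(lra)); pose proof (HC e ltac:(lra)); pose proof (lognormal_cdf_nonneg e).
  rewrite ha; apply Rabs_le; split; nra.
Qed.

Lemma lognormal_cdf_le1 x : lognormal_cdf x <= 1.
Proof.
  destruct (Rle_dec x 0); [rewrite lognormal_cdf_nonpos; lra|].
  rewrite lognormal_cdf_formula, sqrt_PI_eq by lra; pose proof half_sqrt_PI_pos.
  pose proof (gauss_int_bounds (erf_arg x)).
  assert (gauss_int (erf_arg x) / (2 * half_sqrt_PI) <= 1 / 2); [|lra].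
  apply Rmult_le_reg_r with (2 * half_sqrt_PI); [lra|].
  unfold Rdiv; rewrite Rmult_assoc, Rinv_l by lra; lra.
Qed.

Lemma lognormal_survival_far : exists B, 0 < B /\ forall u, 0 < u -> exp mu <= u ->
  1 - lognormal_cdf u <= B / (u * u).
Proof.
  pose proof half_sqrt_PI_pos.
  exists (exp (2 * sigma ^ 2 + 2 * mu) / (2 * (half_sqrt_PI * half_sqrt_PI))).
  split; [apply Rdiv_lt_0_compat; [apply exp_pos|nra]|]; intros u hu hmu.
  pose proof (gauss_int_tail_pos _ (erf_arg_nonneg u hmu)).
  pose proof (gauss_erf_arg_mul_sqr_le u hu).
  rewrite lognormal_cdf_formula, sqrt_PI_eq by lra.
  apply Rle_trans with (gauss (erf_arg u) / half_sqrt_PI / (2 * half_sqrt_PI)).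
  - replace (1 - (1 / 2 + gauss_int (erf_arg u) / (2 * half_sqrt_PI)))
      with ((half_sqrt_PI - gauss_int (erf_arg u)) / (2 * half_sqrt_PI)) by (field; lra).
    unfold Rdiv; apply Rmult_le_compat_r; [apply Rlt_le, Rinv_0_lt_compat|]; lra.
  - apply Rmult_le_reg_r with (u * u * (2 * (half_sqrt_PI * half_sqrt_PI)));
      [apply Rmult_lt_0_compat; nra|].
    replace (gauss (erf_arg u) / half_sqrt_PI / (2 * half_sqrt_PI)
             * (u * u * (2 * (half_sqrt_PI * half_sqrt_PI))))
      with (gauss (erf_arg u) * (u * u)) by (field; lra).
    replace (exp (2 * sigma ^ 2 + 2 * mu) / (2 * (half_sqrt_PI * half_sqrt_PI)) / (u * u)
             * (u * u * (2 * (half_sqrt_PI * half_sqrt_PI))))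
      with (exp (2 * sigma ^ 2 + 2 * mu)) by (field; nra).
    lra.
Qed.

Lemma lognormal_cdf_tail : exists A, 0 < A /\
  forall u, 0 <= u -> 1 - lognormal_cdf u <= A / (1 + u * u).
Proof.
  destruct lognormal_survival_far as [B [hB HB]]; pose proof (exp_pos mu).
  exists (2 + exp mu * exp mu + 2 * B); split; [nra|]; intros u hu.
  assert (hu1 : 0 < 1 + u * u) by nra.
  pose proof (lognormal_cdf_nonneg u).
  destruct (Rle_dec 1 u) as [h1|h1]; [destruct (Rle_dec (exp mu) u) as [h2|h2]|].
  2, 3: apply Rle_trans with 1; [lra|];
        apply Rmult_le_reg_r with (1 + u * u); [nra|];
        unfold Rdiv; rewrite Rmult_assoc, Rinv_l, Rmult_1_r by lra; nra.
  apply Rle_trans with (B / (u * u)); [apply HB; lra|].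
  apply Rmult_le_reg_r with (u * u * (1 + u * u)); [apply Rmult_lt_0_compat; nra|].
  replace (B / (u * u) * (u * u * (1 + u * u))) with (B * (1 + u * u)) by (field; nra).
  replace ((2 + exp mu * exp mu + 2 * B) / (1 + u * u) * (u * u * (1 + u * u)))
    with ((2 + exp mu * exp mu + 2 * B) * (u * u)) by (field; nra).
  assert (0 <= B * (u * u - 1)) by (apply Rmult_le_pos; nra).
  assert (0 <= exp mu * exp mu * (u * u)) by (apply Rmult_le_pos; nra).
  nra.
Qed.

Lemma RInt_lognormal_survival_le : exists C, forall b, 0 <= b ->
  RInt (fun u => 1 - lognormal_cdf u) 0 b <= C.
Proof.
  destruct lognormal_cdf_tail as [A [hA HA]]; exists (A * (PI / 2)); intros b hb.
  assert (hcont : forall z, continuous (fun u => A * / (1 + u ^ 2)) z)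
    by (intros; apply ex_derive_continuous_R; auto_derive; nra).
  apply Rle_trans with (RInt (fun u => A * / (1 + u ^ 2)) 0 b).
  - apply RInt_le; auto; [|apply ex_RInt_continuous_R; auto|].
    + apply ex_RInt_continuous_R; intros z.
      apply (continuous_minus (V := R_NormedModule)); [apply continuous_const|].
      apply lognormal_cdf_continuous.
    + intros x hx; replace (x ^ 2) with (x * x) by ring; apply HA; lra.
  - rewrite RInt_scal_R.
    + rewrite (is_RInt_unique _ 0 b (atan b - atan 0)).
      * rewrite atan_0; pose proof (atan_bound b); apply Rmult_le_compat_l; lra.
      * apply (is_RInt_derive (V := R_CompleteNormedModule) atan).
        -- intros; apply is_derive_Reals, derivable_pt_lim_atan.
        -- intros; apply ex_derive_continuous_R; auto_derive; nra.
    + apply ex_RInt_continuous_R; intros; apply ex_derive_continuous_R; auto_derive; nra.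
Qed.

Lemma RInt_lognormal_conv_nonneg (J : R -> R) t : (forall x, continuous J x) -> 0 <= t ->
  (forall s, 0 <= s <= t -> 0 <= J s) -> 0 <= RInt (fun s => g (t - s) * J s) 0 t.
Proof.
  intros hJ ht hpos; apply RInt_ge_0; auto.
  - apply ex_RInt_continuous_R; intros s.
    apply (continuous_mult (K := R_AbsRing) (fun s => g (t - s)) J); [|apply hJ].
    apply (continuous_comp (fun s => t - s) g); [|apply lognormal_continuous].
    apply ex_derive_continuous_R; auto_derive; trivial.
  - intros s hs; apply Rmult_le_pos; [apply lognormal_nonneg|apply hpos; lra].
Qed.

(* Total mass at most one turns a strict running maximum into a strict bound. *)
Lemma RInt_lognormal_conv_lt (J : R -> R) t : (forall x, continuous J x) -> 0 < t ->
  0 < J t -> (forall s, 0 <= s < t -> J s < J t) -> RInt (fun s => g (t - s) * J s) 0 t < J t.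
Proof.
  intros hJ ht hJt hlt.
  assert (hgc : forall s, continuous (fun s => g (t - s)) s).
  { intros s; apply (continuous_comp (fun s => t - s) g); [|apply lognormal_continuous].
    apply ex_derive_continuous_R; auto_derive; trivial. }
  apply Rlt_le_trans with (RInt (fun s => J t * g (t - s)) 0 t).
  - apply RInt_lt; auto.
    + intros s _; apply (continuous_mult (K := R_AbsRing) (fun _ => J t));
        [apply continuous_const|apply hgc].
    + intros s _; apply (continuous_mult (K := R_AbsRing)); [apply hgc|apply hJ].
    + intros s hs; rewrite (Rmult_comm (J t)).
      apply Rmult_lt_compat_l; [apply lognormal_pos; lra|apply hlt; lra].
  - rewrite RInt_scal_R by (apply ex_RInt_continuous_R, hgc).
    rewrite (RInt_reflect g t lognormal_continuous).
    pose proof (lognormal_cdf_le1 t); unfold lognormal_cdf in *; nra.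
Qed.

End Lognormal.

Section SurvivalConvolution.

Variables (K k : R -> R).
Hypothesis is_derive_K : forall x, is_derive K x (k x).
Hypothesis k_continuous : forall x, continuous k x.

(* When [K] is the distribution function of the kernel [k], this is the integral of
   [Ia k J] over [[0, x]]. *)
Definition survival_conv (J : R -> R) (x : R) : R := RInt (fun t => J t * (1 - K (x - t))) 0 x.

Lemma is_derive_survival_conv (J : R -> R) x : (forall y, continuous J y) -> K 0 = 0 ->
  is_derive (survival_conv J) x (Ia k J x).
Proof.
  intros hJ hK0.
  set (f := fun u t => J t * (1 - K (u - t))).
  assert (hDf : forall u t, Derive (fun z => f z t) u = - (J t * k (u - t))).
  { intros u t; apply is_derive_unique; unfold f; auto_derive;
      [eexists; apply is_derive_K|].
    replace (Derive (fun y : R => K y) (u + - t)) with (k (u - t))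
      by (symmetry; apply is_derive_unique, is_derive_K).
    ring. }
  assert (hf : forall u t, continuous (fun t => f u t) t).
  { intros u t; apply (continuous_mult (K := R_AbsRing)); [apply hJ|].
    apply (continuous_minus (V := R_NormedModule)); [apply continuous_const|].
    apply (continuous_comp (fun t => u - t) K);
      [|apply ex_derive_continuous_R; eexists; apply is_derive_K].
    apply ex_derive_continuous_R; auto_derive; trivial. }
  assert (hf2 : forall u t, continuity_2d_pt (fun u v => Derive (fun z => f z v) u) u t).
  { intros u t; apply continuity_2d_pt_ext with (f := fun u v => - (J v * k (u - v)));
      [intros; symmetry; apply hDf|].
    apply continuity_2d_pt_opp, continuity_2d_pt_mult.
    - apply continuity_1d_2d_pt_comp with (f := J) (g := fun _ v => v);
        [apply continuity_pt_filterlim, hJ|apply continuity_2d_pt_id2].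
    - apply continuity_1d_2d_pt_comp with (f := k) (g := fun u v => u - v);
        [apply continuity_pt_filterlim, k_continuous|].
      apply continuity_2d_pt_minus; [apply continuity_2d_pt_id1|apply continuity_2d_pt_id2]. }
  replace (Ia k J x) with (RInt (fun t => Derive (fun u => f u t) x) 0 x + f x x * 1).
  - apply (is_derive_RInt_param_bound_comp_aux3 f 0 (fun y => y)).
    + apply filter_forall; intros; apply ex_RInt_continuous_R; auto.
    + exists (mkposreal 1 Rlt_0_1); apply filter_forall; intros; apply ex_RInt_continuous_R; auto.
    + apply (is_derive_id (K := R_AbsRing)).
    + exists (mkposreal 1 Rlt_0_1); apply filter_forall; intros y t _.
      unfold f; auto_derive; eexists; apply is_derive_K.
    + intros; apply hf2.
    + exists (mkposreal 1 Rlt_0_1); intros; apply hf2.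
    + apply continuity_pt_filterlim, hf.
  - rewrite (RInt_ext_R _ (fun t => -1 * (k (x - t) * J t))) by (intros; rewrite hDf; ring).
    unfold Ia, f; rewrite Rminus_diag, hK0, RInt_scal_R; [ring|].
    apply ex_RInt_continuous_R; intros z; apply (continuous_mult (K := R_AbsRing)); [|apply hJ].
    apply (continuous_comp (fun t => x - t) k); [|apply k_continuous].
    apply ex_derive_continuous_R; auto_derive; trivial.
Qed.

Lemma survival_conv_le (J : R -> R) b B : (forall y, continuous J y) -> (forall x, K x <= 1) ->
  0 <= b -> (forall t, 0 <= t <= b -> 0 <= J t <= B) ->
  survival_conv J b <= B * RInt (fun u => 1 - K u) 0 b.
Proof.
  intros hJ hK1 hb hJb.
  assert (hKc : forall z, continuous (fun u => 1 - K u) z).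
  { intros; apply (continuous_minus (V := R_NormedModule));
      [apply continuous_const|apply ex_derive_continuous_R; eexists; apply is_derive_K]. }
  assert (hKrc : forall z, continuous (fun t => 1 - K (b - t)) z).
  { intros; apply (continuous_comp (fun t => b - t) (fun u => 1 - K u)); [|apply hKc].
    apply ex_derive_continuous_R; auto_derive; trivial. }
  rewrite <- (RInt_reflect (fun u => 1 - K u) b hKc), <- RInt_scal_R
    by (apply ex_RInt_continuous_R, hKrc).
  apply RInt_le; auto.
  - apply ex_RInt_continuous_R; intros; apply (continuous_mult (K := R_AbsRing)); auto.
  - apply ex_RInt_continuous_R; intros; apply (continuous_mult (K := R_AbsRing));
      [apply continuous_const|apply hKrc].
  - intros t ht; specialize (hJb t ltac:(lra)); pose proof (hK1 (b - t)).
    apply Rmult_le_compat_r; lra.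
Qed.

End SurvivalConvolution.

Lemma is_RInt_gen_of_derive_pinfty (F f : R -> R) L :
  (forall x, is_derive F x (f x)) -> (forall x, continuous f x) ->
  filterlim F (Rbar_locally p_infty) (locally L) ->
  is_RInt_gen f (at_point 0) (Rbar_locally p_infty) (L - F 0).
Proof.
  intros hd hc hL.
  apply is_RInt_gen_ext with (Derive F).
  - apply filter_forall; intros; apply is_derive_unique, hd.
  - apply is_RInt_gen_Derive; auto.
    + apply filter_forall; intros; eexists; apply hd.
    + apply filter_forall; intros ab x _.
      apply continuous_ext with f; [intros; symmetry; apply is_derive_unique, hd|apply hc].
    + intros P HP; exact (locally_singleton _ _ HP).
Qed.

(** * The solution *)

Section Solution.

Variables (M beta I0 mu sigma : R) (I D : R -> R).
Hypotheses (hbeta : 0 < beta) (hI0 : 0 < I0) (hI0M : I0 < M) (hsigma : 0 < sigma).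
Hypothesis hder : forall t, 0 < t -> is_derive I t (D t).
Hypothesis hder0 : filterlim (fun h => (I h - I 0) / h) (at_right 0) (locally (D 0)).
Hypothesis hDcont : forall t, 0 < t -> continuous D t.
Hypothesis hDcont0 : filterlim D (at_right 0) (locally (D 0)).
Hypothesis heq : forall t, 0 <= t -> D t = beta * (M - I t) * Ia (lognormal mu sigma) I t.
Hypothesis hinit : I 0 = I0.

Let Ie := extend0 I.
Let De := extend0 D.

Lemma extend0_I_continuous x : continuous Ie x.
Proof.
  apply extend0_continuous; [|exact (at_right_continuous_of_diff_quot I (D 0) hder0)].
  intros; apply ex_derive_continuous_R; eexists; apply hder; auto.
Qed.

Lemma extend0_D_continuous x : continuous De x.
Proof. apply extend0_continuous; auto. Qed.

Lemma is_derive_extend0_I t : 0 < t -> is_derive Ie t (D t).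
Proof.
  intros ht; apply is_derive_ext_loc with I; [|apply hder; auto].
  exists (mkposreal t ht); intros y hy.
  change (Rabs (y - t) < t) in hy; apply Rabs_def2 in hy.
  symmetry; apply extend0_nonneg; lra.
Qed.

Lemma Ia_extend0 t : 0 <= t -> Ia (lognormal mu sigma) Ie t = Ia (lognormal mu sigma) I t.
Proof.
  intros ht; unfold Ia, Ie; rewrite extend0_nonneg by auto; f_equal.
  apply RInt_ext_R; intros s hs; rewrite Rmin_left, Rmax_right in hs by lra.
  rewrite extend0_nonneg by lra; reflexivity.
Qed.

Lemma Ia_0 : Ia (lognormal mu sigma) I 0 = I0.
Proof. unfold Ia; rewrite RInt_point_R, hinit; ring. Qed.

Lemma solution_open t : 0 <= t -> 0 < D t /\ I t < M ->
  exists d, 0 < d /\ forall s, t < s < t + d -> 0 < D s /\ I s < M.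
Proof.
  intros ht [hDt hIt].
  destruct (continuous_pos_near De t (extend0_D_continuous t)) as [d1 [hd1 Hd1]];
    [unfold De; rewrite extend0_nonneg; auto|].
  destruct (continuous_pos_near (fun s => M - Ie s) t) as [d2 [hd2 Hd2]].
  { apply (continuous_minus (V := R_NormedModule));
      [apply continuous_const|apply extend0_I_continuous]. }
  { unfold Ie; rewrite extend0_nonneg; lra. }
  exists (Rmin d1 d2); split; [apply Rmin_glb_lt; auto|]; intros s hs.
  pose proof (Rmin_l d1 d2); pose proof (Rmin_r d1 d2).
  specialize (Hd1 s ltac:(rewrite Rabs_right; lra)).
  specialize (Hd2 s ltac:(rewrite Rabs_right; lra)).
  unfold De, Ie in *; rewrite extend0_nonneg in Hd1, Hd2 by lra; split; lra.
Qed.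

Section Prefix.

Variable t : R.
Hypothesis ht : 0 < t.
Hypothesis hprefix : forall s, 0 <= s < t -> 0 < D s /\ I s < M.

Lemma extend0_I_lt_prefix a b : 0 <= a < b -> b <= t -> Ie a < Ie b.
Proof.
  intros hab hb; apply (lt_of_derive_pos Ie D a b); try lra.
  - intros x hx; apply is_derive_extend0_I; lra.
  - intros; apply extend0_I_continuous.
  - intros x hx; apply hprefix; lra.
Qed.

Lemma extend0_I_ge_prefix s : 0 <= s <= t -> I0 <= Ie s.
Proof.
  intros hs; rewrite <- hinit, <- (extend0_nonneg I 0) by lra.
  destruct (Req_dec s 0) as [->|hs0]; [apply Rle_refl|].
  apply Rlt_le, extend0_I_lt_prefix; lra.
Qed.

Lemma Ia_le_prefix s : 0 <= s <= t -> Ia (lognormal mu sigma) Ie s <= Ie s.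
Proof.
  intros hs; unfold Ia.
  pose proof (RInt_lognormal_conv_nonneg mu sigma hsigma Ie s extend0_I_continuous
                ltac:(lra) (fun u hu => Rle_trans _ _ _ (Rlt_le _ _ hI0)
                                          (extend0_I_ge_prefix u ltac:(lra)))).
  lra.
Qed.

(* [(M - I) e^(beta M s)] is nondecreasing while [Ia <= I < M], so [I] cannot reach [M]. *)
Lemma I_lt_M_prefix : I t < M.
Proof.
  set (E := fun s => exp (beta * M * s)).
  assert (hmono : (M - Ie 0) * E 0 <= (M - Ie t) * E t).
  { apply (le_of_derive_nonneg (fun s => (M - Ie s) * E s)
             (fun s => - D s * E s + (M - Ie s) * (beta * M * E s))); try lra.
    - intros x hx; unfold E; auto_derive; [eexists; apply is_derive_extend0_I; lra|].
      replace (Derive (fun y : R => Ie y) x) with (D x)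
        by (symmetry; apply is_derive_unique, is_derive_extend0_I; lra).
      ring.
    - intros x _; apply (continuous_mult (K := R_AbsRing)).
      + apply (continuous_minus (V := R_NormedModule));
          [apply continuous_const|apply extend0_I_continuous].
      + apply ex_derive_continuous_R; unfold E; auto_derive; trivial.
    - intros x hx; destruct (hprefix x ltac:(lra)) as [_ hIx].
      pose proof (Ia_le_prefix x ltac:(lra)) as hIa.
      rewrite heq, <- (Ia_extend0 x) by lra; unfold Ie in *; rewrite extend0_nonneg in * by lra.
      set (ia := Ia (lognormal mu sigma) (extend0 I) x) in *.
      replace (- (beta * (M - I x) * ia) * E x + (M - I x) * (beta * M * E x))
        with (beta * E x * ((M - I x) * (M - ia))) by ring.
      apply Rmult_le_pos; [apply Rmult_le_pos; [lra|apply Rlt_le, exp_pos]|].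
      apply Rmult_le_pos; lra. }
  unfold E, Ie in hmono; rewrite Rmult_0_r, exp_0, Rmult_1_r, !extend0_nonneg, hinit in hmono
    by lra.
  pose proof (exp_pos (beta * M * t)).
  destruct (Rlt_le_dec (I t) M) as [|hge]; auto.
  assert ((M - I t) * exp (beta * M * t) <= 0) by (apply Rmult_le_0_r; lra); lra.
Qed.

Lemma D_pos_prefix : 0 < D t.
Proof.
  pose proof (extend0_I_ge_prefix t ltac:(lra)) as hge.
  rewrite heq, <- Ia_extend0 by lra.
  apply Rmult_lt_0_compat; [apply Rmult_lt_0_compat; [lra|pose proof I_lt_M_prefix; lra]|].
  pose proof (RInt_lognormal_conv_lt mu sigma hsigma Ie t extend0_I_continuous ht ltac:(lra)
                (fun s hs => extend0_I_lt_prefix s t ltac:(lra) ltac:(lra))).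
  unfold Ia; lra.
Qed.

End Prefix.

Lemma D_pos_I_lt_M : forall t, 0 <= t -> 0 < D t /\ I t < M.
Proof.
  apply (real_induction (fun t => 0 < D t /\ I t < M)); [|apply solution_open|].
  - split; [|lra]; rewrite heq, Ia_0, hinit by lra.
    apply Rmult_lt_0_compat; [apply Rmult_lt_0_compat|]; lra.
  - intros s hs hprefix; split; [apply D_pos_prefix|apply I_lt_M_prefix]; auto.
Qed.

Lemma extend0_I_bounds s : I0 <= Ie s < M.
Proof.
  destruct (Rle_dec s 0) as [hs|hs].
  - unfold Ie; rewrite extend0_nonpos, hinit by auto; lra.
  - assert (hpre : forall u, 0 <= u < s -> 0 < D u /\ I u < M)
      by (intros; apply D_pos_I_lt_M; lra).
    split; [apply (extend0_I_ge_prefix s hpre); lra|].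
    unfold Ie; rewrite extend0_nonneg by lra; apply D_pos_I_lt_M; lra.
Qed.

Lemma Ia_extend0_eq x : Ia (lognormal mu sigma) Ie x = De x / (beta * (M - Ie x)).
Proof.
  pose proof (extend0_I_bounds x).
  destruct (Rle_dec 0 x) as [hx|hx].
  - unfold De; rewrite extend0_nonneg, heq, Ia_extend0 by auto.
    unfold Ie; rewrite extend0_nonneg by auto; field.
    unfold Ie in *; rewrite extend0_nonneg in * by auto; split; lra.
  - unfold Ia, De; rewrite extend0_nonpos, heq, Ia_0 by lra.
    unfold Ie; rewrite extend0_nonpos, hinit by lra.
    rewrite (RInt_ext_R _ (fun _ => 0)), RInt_const_R; [field; lra|].
    intros s hs; rewrite Rmin_right, Rmax_left in hs by lra.
    rewrite lognormal_nonpos by lra; ring.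
Qed.

Lemma Ia_extend0_pos x : 0 < Ia (lognormal mu sigma) Ie x.
Proof.
  rewrite Ia_extend0_eq; pose proof (extend0_I_bounds x).
  apply Rdiv_lt_0_compat; [|apply Rmult_lt_0_compat; lra].
  unfold De; destruct (Rle_dec 0 x).
  - rewrite extend0_nonneg by auto; apply D_pos_I_lt_M; auto.
  - rewrite extend0_nonpos by lra; apply D_pos_I_lt_M; lra.
Qed.

Lemma Ia_extend0_continuous x : continuous (Ia (lognormal mu sigma) Ie) x.
Proof.
  apply continuous_ext with (fun y => De y / (beta * (M - Ie y)));
    [intros; symmetry; apply Ia_extend0_eq|].
  pose proof (extend0_I_bounds x).
  apply (continuous_mult (K := R_AbsRing)); [apply extend0_D_continuous|].
  apply continuous_Rinv_comp; [|apply Rgt_not_eq, Rmult_lt_0_compat; lra].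
  apply (continuous_scal_r (K := R_AbsRing) (V := R_NormedModule) beta (fun y => M - Ie y)).
  apply (continuous_minus (V := R_NormedModule));
    [apply continuous_const|apply extend0_I_continuous].
Qed.

Lemma is_derive_survival_conv_extend0 x :
  is_derive (survival_conv (lognormal_cdf mu sigma) Ie) x (Ia (lognormal mu sigma) Ie x).
Proof.
  apply (is_derive_survival_conv _ (lognormal mu sigma)).
  - intros; apply is_derive_lognormal_cdf; auto.
  - intros; apply lognormal_continuous; auto.
  - apply extend0_I_continuous.
  - apply lognormal_cdf_nonpos; lra.
Qed.

Lemma survival_conv_extend0_nondecreasing a b : 0 <= a <= b ->
  survival_conv (lognormal_cdf mu sigma) Ie a <= survival_conv (lognormal_cdf mu sigma) Ie b.
Proof.
  intros hab; apply (le_of_derive_nonneg _ (Ia (lognormal mu sigma) Ie)); try lra.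
  - intros; apply is_derive_survival_conv_extend0.
  - intros; apply ex_derive_continuous_R; eexists; apply is_derive_survival_conv_extend0.
  - intros; apply Rlt_le, Ia_extend0_pos.
Qed.

Lemma survival_conv_extend0_bounded :
  exists B, forall b, 0 <= b -> survival_conv (lognormal_cdf mu sigma) Ie b <= B.
Proof.
  destruct (RInt_lognormal_survival_le mu sigma hsigma) as [C hC].
  exists (M * C); intros b hb; eapply Rle_trans.
  - apply (survival_conv_le _ (lognormal mu sigma) (is_derive_lognormal_cdf mu sigma hsigma)
             Ie b M extend0_I_continuous); auto.
    + intros; apply lognormal_cdf_le1; auto.
    + intros t _; pose proof (extend0_I_bounds t); lra.
  - apply Rmult_le_compat_l; [lra|apply hC; auto].
Qed.

End Solution.

Theorem proposition3p9
  (M beta I0 mu sigma : R) (I D : R -> R)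
  (hM : 0 < M) (hbeta : 0 < beta) (hI0 : 0 < I0) (hI0M : I0 < M)
  (hsigma : 0 < sigma)
  (* I is C^1 on [0, +oo) with derivative D (one-sided at 0) *)
  (hder : forall t, 0 < t -> is_derive I t (D t))
  (hder0 : filterlim (fun h => (I h - I 0) / h) (at_right 0) (locally (D 0)))
  (hDcont : forall t, 0 < t -> continuous D t)
  (hDcont0 : filterlim D (at_right 0) (locally (D 0)))
  (* the equation on [0, +oo) and the initial condition *)
  (heq : forall t, 0 <= t ->
     D t = beta * (M - I t) * Ia (lognormal mu sigma) I t)
  (hinit : I 0 = I0) :
  exists L : R,
    is_RInt_gen (Ia (lognormal mu sigma) I) (at_point 0) (Rbar_locally p_infty) L.
Proof.
  set (Psi := survival_conv (lognormal_cdf mu sigma) (extend0 I)).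
  destruct (survival_conv_extend0_bounded M beta I0 mu sigma I D) as [B hB]; auto.
  destruct (cvg_pinfty_of_nondecreasing Psi B) as [L hL]; auto.
  { intros a b; apply (survival_conv_extend0_nondecreasing M beta I0 mu sigma I D); auto. }
  exists (L - Psi 0); apply is_RInt_gen_ext with (Ia (lognormal mu sigma) (extend0 I)).
  - exists (fun a => a = 0) (fun b => 0 < b); [reflexivity|exists 0; auto|].
    intros a b -> hb x hx; simpl in hx; rewrite Rmin_left, Rmax_right in hx by lra.
    apply (Ia_extend0 mu sigma I); lra.
  - apply is_RInt_gen_of_derive_pinfty; auto.
    + intros; apply (is_derive_survival_conv_extend0 mu sigma I D); auto.
    + intros; apply (Ia_extend0_continuous M beta I0 mu sigma I D); auto.
Qed.
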